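(* Let $\eta\in C^2(\mathbb T^N,(0,\infty))$, $0\le a\le b$, $L\ge0$, $i\in[1,N]$ and $k\ne i$. The measure with density $\eta$ belongs to $\mathcal M^{(i,k)}_{a,b,L}$ if and only if (i) $\eta(\cdot;\hat{\boldsymbol x}_i)\in\mathcal V_a$ for all $\hat{\boldsymbol x}_i\in\mathbb T^{N-1}$, and (ii) $A^{(i,k)}_{\eta,b}(\hat{\boldsymbol x}_i)-B^{(i,k)}_{\eta,b}(\hat{\boldsymbol x}_i)\le L$ for every $\hat{\boldsymbol x}_i\in\mathbb T^{N-1}$, where $$A^{(i,k)}_{\eta,b}(\hat{\boldsymbol x}_i):=\sup_{x\in\mathbb T}\max\Big\{\frac{\partial_k\eta}{\eta},\ \frac{b\partial_k\eta-\partial_k\partial_i\eta}{b\eta-\partial_i\eta},\ \frac{b\partial_k\eta+\partial_k\partial_i\eta}{b\eta+\partial_i\eta}\Big\}(x;\hat{\boldsymbol x}_i),$$ and $B^{(i,k)}_{\eta,b}(\hat{\boldsymbol x}_i)$ is defined by the same expression with $\sup_x\max$ replaced by $\inf_x\min$.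
   Context: $\mathbb T=\mathbb R/\mathbb Z$ with torus distance; $\boldsymbol x=(x_i;\hat{\boldsymbol x}_i)$ with $\hat{\boldsymbol x}_i\in\mathbb T^{N-1}$ the remaining coordinates. $\mathcal V_a:=\{\psi\in C^2(\mathbb T,(0,\infty)):|\frac d{dx}\log\psi|<a\}$; $\beta_a(\psi_1,\psi_2):=\inf\{t>0:t\psi_1-\psi_2\in\mathcal V_a\}$, $\theta_a(\psi_1,\psi_2):=\log\beta_a(\psi_1,\psi_2)+\log\beta_a(\psi_2,\psi_1)$. For a measure with density $\rho\in C^2(\mathbb T^N,(0,\infty))$, $\rho_{\hat{\boldsymbol x}_i}(x):=\rho(x;\hat{\boldsymbol x}_i)/\int\rho(s;\hat{\boldsymbol x}_i)ds$; it belongs to $\mathcal M^{(i,k)}_{a,b,L}$ iff $\rho_{\hat{\boldsymbol x}_i}\in\mathcal V_a$ for all $\hat{\boldsymbol x}_i$ and $\theta_b(\rho_{\hat{\boldsymbol x}_i},\rho_{\hat{\boldsymbol x}'_i})\le L|x_k-x'_k|$ whenever $\hat{\boldsymbol x}_i,\hat{\boldsymbol x}'_i$ differ only in their $k$-th coordinates $x_k,x'_k$. *)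

From Stdlib Require Import Reals Lra.
From Coquelicot Require Import Coquelicot.
Open Scope R_scope.

(* Points of R^N are represented as maps nat -> R; only the coordinates
   0 .. N-1 are relevant (see [torus_fun]).  Coordinates are 0-based. *)
Definition upd (y : nat -> R) (k : nat) (t : R) : nat -> R :=
  fun j => if Nat.eqb j k then t else y j.

Definition partial (k : nat) (f : (nat -> R) -> R) : (nat -> R) -> R :=
  fun y => Derive (fun t => f (upd y k t)) (y k).

(* f is a function on the torus T^N = (R/Z)^N : it depends only on the
   first N coordinates and is 1-periodic in each of them *)
Definition torus_fun (N : nat) (f : (nat -> R) -> R) : Prop :=
  (forall x y, (forall j, (j < N)%nat -> x j = y j) -> f x = f y) /\
  (forall x j, (j < N)%nat -> f (upd x j (x j + 1)) = f x).

Definition contN (N : nat) (f : (nat -> R) -> R) : Prop :=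
  forall x eps, 0 < eps -> exists delta, 0 < delta /\
    forall y, (forall j, (j < N)%nat -> Rabs (y j - x j) < delta) ->
      Rabs (f y - f x) < eps.

Definition C2N (N : nat) (f : (nat -> R) -> R) : Prop :=
  contN N f /\
  forall j l, (j < N)%nat -> (l < N)%nat ->
    (forall x, ex_derive (fun t => f (upd x j t)) (x j)) /\
    (forall x, ex_derive (fun t => partial j f (upd x l t)) (x l)) /\
    contN N (partial j f) /\ contN N (partial l (partial j f)).

Definition C2T (psi : R -> R) : Prop :=
  (forall s, psi (s + 1) = psi s) /\
  forall s, ex_derive psi s /\ ex_derive (Derive psi) s /\
            continuous (Derive (Derive psi)) s.

Definition Va (a : R) (psi : R -> R) : Prop :=
  C2T psi /\ (forall s, 0 < psi s) /\
  forall s, Rabs (Derive (fun y => ln (psi y)) s) < a.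

(* beta_a(psi1,psi2) = inf {t > 0 : t psi1 - psi2 in V_a}  (inf of empty = +oo) *)
Definition beta (a : R) (psi1 psi2 : R -> R) : Rbar :=
  Glb_Rbar (fun t => 0 < t /\ Va a (fun s => t * psi1 s - psi2 s)).

(* theta_a = log beta_a(psi1,psi2) + log beta_a(psi2,psi1), with log(+oo)=+oo *)
Definition theta (a : R) (psi1 psi2 : R -> R) : Rbar :=
  match beta a psi1 psi2, beta a psi2 psi1 with
  | Finite u, Finite v => Finite (ln u + ln v)
  | _, _ => p_infty
  end.

Definition tdist (s t : R) : R :=
  Rmin (frac_part (s - t)) (1 - frac_part (s - t)).

(* the slice eta(. ; hat x_i) (coordinate i of x is overwritten) *)
Definition slice (i : nat) (eta : (nat -> R) -> R) (x : nat -> R) : R -> R :=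
  fun s => eta (upd x i s).

Definition rho_cond (i : nat) (rho : (nat -> R) -> R) (x : nat -> R) : R -> R :=
  fun s => rho (upd x i s) / RInt (slice i rho x) 0 1.

Definition InM (i k : nat) (a b L : R) (rho : (nat -> R) -> R) : Prop :=
  (forall x, Va a (rho_cond i rho x)) /\
  (forall x x', (forall j, j <> k -> x j = x' j) ->
     Rbar_le (theta b (rho_cond i rho x) (rho_cond i rho x'))
             (Finite (L * tdist (x k) (x' k)))).

Definition quot_max (i k : nat) (b : R) (eta : (nat -> R) -> R)
  (x : nat -> R) (s : R) : R :=
  let y := upd x i s in
  Rmax (partial k eta y / eta y)
   (Rmax ((b * partial k eta y - partial k (partial i eta) y)
            / (b * eta y - partial i eta y))
         ((b * partial k eta y + partial k (partial i eta) y)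
            / (b * eta y + partial i eta y))).

Definition quot_min (i k : nat) (b : R) (eta : (nat -> R) -> R)
  (x : nat -> R) (s : R) : R :=
  let y := upd x i s in
  Rmin (partial k eta y / eta y)
   (Rmin ((b * partial k eta y - partial k (partial i eta) y)
            / (b * eta y - partial i eta y))
         ((b * partial k eta y + partial k (partial i eta) y)
            / (b * eta y + partial i eta y))).

Definition A_ik (i k : nat) (b : R) (eta : (nat -> R) -> R) (x : nat -> R) : Rbar :=
  Lub_Rbar (fun v => exists s, v = quot_max i k b eta x s).

Definition B_ik (i k : nat) (b : R) (eta : (nat -> R) -> R) (x : nat -> R) : Rbar :=
  Glb_Rbar (fun v => exists s, v = quot_min i k b eta x s).

From Stdlib Require Import Reals Lra Lia FunctionalExtensionality.
From Coquelicot Require Import Coquelicot.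
Open Scope R_scope.

(* 1. A positive periodic C^2 function psi lies in V_b iff its three
      "channels" psi, b psi - psi', b psi + psi' are positive.  Channels are
      linear in psi, so beta_b(psi1,psi2) is the supremum over channels j and
      points s of the ratios l_j(psi2)(s) / l_j(psi1)(s), and
      theta_b(psi1,psi2) <= c iff every sum log(ratio 1->2) + log(ratio 2->1)
      is at most c  ([theta_le_iff]).
   2. Normalising a slice of eta by its positive mass does not change its
      membership in V_a, and the masses cancel in the sums of log-ratios.
      Along the k-th coordinate such a sum between the slices at t and t' is
      the increment g(t') - g(t) of a gap function g whose derivative is the
      difference of two of the quotients G_j/F_j appearing in A and B.
   3. Condition (ii), A - B <= L, says that any two such quotients differ by
      at most L  ([A_minus_B_le_iff]).  Sufficiency follows from the mean
      value theorem and periodicity in x_k, the torus distance being attained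
      by an integer translate ([fiber_theta_le]); necessity from
      differentiating the Lipschitz bound at x_k ([spread_of_theta_le]). *)

Lemma upd_same y k t : upd y k t k = t.
Proof. unfold upd. now rewrite Nat.eqb_refl. Qed.

Lemma upd_other y k t j : j <> k -> upd y k t j = y j.
Proof. intro H. unfold upd. apply Nat.eqb_neq in H. now rewrite H. Qed.

Lemma upd_upd y k s t : upd (upd y k s) k t = upd y k t.
Proof.
  apply functional_extensionality. intro j. unfold upd.
  destruct (Nat.eqb j k); auto.
Qed.

Lemma upd_comm y k i t s : k <> i -> upd (upd y k t) i s = upd (upd y i s) k t.
Proof.
  intro H. apply functional_extensionality. intro j. unfold upd.
  destruct (Nat.eqb_spec j i); destruct (Nat.eqb_spec j k); subst; auto.
  congruence.
Qed.

Lemma upd_id y k : upd y k (y k) = y.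
Proof.
  apply functional_extensionality. intro j. unfold upd.
  destruct (Nat.eqb_spec j k); subst; auto.
Qed.

Lemma Derive_ln_comp (phi : R -> R) s : ex_derive phi s -> 0 < phi s ->
  Derive (fun y => ln (phi y)) s = Derive phi s / phi s.
Proof.
  intros Hd Hp. apply is_derive_unique.
  pose proof (is_derive_comp ln phi s (/ phi s) (Derive phi s) (is_derive_ln _ Hp)
     (Derive_correct _ _ Hd)) as H.
  unfold scal in H; simpl in H; unfold mult in H; simpl in H.
  unfold Rdiv. exact H.
Qed.

Lemma Derive_comb (f g : R -> R) al be s : ex_derive f s -> ex_derive g s ->
  Derive (fun s => al * f s - be * g s) s = al * Derive f s - be * Derive g s.
Proof.
  intros Hf Hg. apply is_derive_unique.
  apply (is_derive_minus (fun s => al * f s) (fun s => be * g s) s);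
    apply is_derive_scal; now apply Derive_correct.
Qed.

Lemma C2T_comb f g al be : C2T f -> C2T g -> C2T (fun s => al * f s - be * g s).
Proof.
  intros [Pf Df] [Pg Dg]. split.
  - intro s. now rewrite Pf, Pg.
  - assert (E1 : Derive (fun s => al * f s - be * g s) =
                 fun s => al * Derive f s - be * Derive g s).
    { apply functional_extensionality. intro s.
      apply Derive_comb; [apply Df | apply Dg]. }
    assert (E2 : Derive (fun s => al * Derive f s - be * Derive g s) =
                 fun s => al * Derive (Derive f) s - be * Derive (Derive g) s).
    { apply functional_extensionality. intro s.
      apply Derive_comb; [apply Df | apply Dg]. }
    intro s. rewrite E1, E2.
    destruct (Df s) as [Df1 [Df2 Df3]], (Dg s) as [Dg1 [Dg2 Dg3]].
    split; [| split].
    + apply (ex_derive_minus (fun s => al * f s) (fun s => be * g s));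
        now apply ex_derive_scal.
    + apply (ex_derive_minus (fun s => al * Derive f s) (fun s => be * Derive g s));
        now apply ex_derive_scal.
    + apply continuity_pt_filterlim.
      apply (continuity_pt_minus (fun s => al * _ s) (fun s => be * _ s));
        apply continuity_pt_scal; now apply continuity_pt_filterlim.
Qed.

Definition channel (b : R) (j : nat) (psi : R -> R) (s : R) : R :=
  match j with
  | O => psi s
  | S O => b * psi s - Derive psi s
  | _ => b * psi s + Derive psi s
  end.

Lemma Va_channels b psi : Va b psi <-> C2T psi /\ forall j s, 0 < channel b j psi s.
Proof.
  split.
  - intros [HC [Hp Hd]]. split; auto. intros j s.
    assert (Hs := Hd s). rewrite Derive_ln_comp in Hs; [| apply HC | apply Hp].
    apply Rabs_def2 in Hs. destruct Hs as [H1 H2]. specialize (Hp s).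
    assert (E : Derive psi s = (Derive psi s / psi s) * psi s) by (field; lra).
    destruct j as [| [| j]]; simpl; auto; rewrite E; nra.
  - intros [HC Hj]. pose proof (Hj 0%nat) as H0. simpl in H0.
    split; [auto | split; [exact H0 |]].
    intro s. rewrite Derive_ln_comp; [| apply HC | apply H0].
    pose proof (Hj 1%nat s) as H1. pose proof (Hj 2%nat s) as H2.
    specialize (H0 s). simpl in *.
    apply Rabs_def1; apply (Rmult_lt_reg_r (psi s)); auto; unfold Rdiv;
      rewrite Rmult_assoc, Rinv_l by lra; lra.
Qed.

Lemma Va_weaken a b psi : a <= b -> Va a psi -> Va b psi.
Proof.
  intros Hab [HC [Hp Hd]]. split; [exact HC | split; [exact Hp |]].
  intro s. specialize (Hd s). lra.
Qed.

Lemma channel_comb b j (f g : R -> R) al be s : ex_derive f s -> ex_derive g s ->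
  channel b j (fun s => al * f s - be * g s) s = al * channel b j f s - be * channel b j g s.
Proof.
  intros Hf Hg. destruct j as [| [| j]]; simpl; try rewrite Derive_comb by auto; ring.
Qed.

Lemma channel_div b j (f : R -> R) c s : ex_derive f s ->
  channel b j (fun s => f s / c) s = channel b j f s / c.
Proof.
  intro Hf.
  replace (fun s => f s / c) with (fun s => / c * f s - 0 * f s)
    by (apply functional_extensionality; intro; unfold Rdiv; ring).
  rewrite channel_comb by auto. unfold Rdiv. ring.
Qed.

Lemma Va_div b (f : R -> R) c : 0 < c -> Va b f -> Va b (fun s => f s / c).
Proof.
  intros Hc H. apply Va_channels in H. destruct H as [HC Hj]. apply Va_channels.
  split.
  - replace (fun s => f s / c) with (fun s => / c * f s - 0 * f s)
      by (apply functional_extensionality; intro; unfold Rdiv; ring).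
    now apply C2T_comb.
  - intros j s. rewrite channel_div by apply HC. apply Rdiv_lt_0_compat; auto.
Qed.

Definition ratio b (psi1 psi2 : R -> R) j s : R := channel b j psi2 s / channel b j psi1 s.

Definition ratios b (psi1 psi2 : R -> R) : R -> Prop :=
  fun r => exists j s, r = ratio b psi1 psi2 j s.

Lemma ratio_pos b psi1 psi2 j s : Va b psi1 -> Va b psi2 -> 0 < ratio b psi1 psi2 j s.
Proof.
  intros H1 H2. apply Va_channels in H1, H2.
  apply Rdiv_lt_0_compat; [apply H2 | apply H1].
Qed.

(* If t psi1 - psi2 lies in V_b, each channel of psi2 is below t times that of psi1. *)
Lemma ratio_le_beta b psi1 psi2 j s : Va b psi1 -> Va b psi2 ->
  Rbar_le (Finite (ratio b psi1 psi2 j s)) (beta b psi1 psi2).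
Proof.
  intros H1 H2. unfold beta.
  apply (Glb_Rbar_correct (fun t => 0 < t /\ Va b (fun s => t * psi1 s - psi2 s))).
  intros t [Ht HV]. apply Va_channels in H1, H2, HV.
  destruct H1 as [HC1 P1], H2 as [HC2 P2], HV as [_ HV]. specialize (HV j s).
  replace (fun s => t * psi1 s - psi2 s) with (fun s => t * psi1 s - 1 * psi2 s)
    in HV by (apply functional_extensionality; intro; ring).
  rewrite channel_comb in HV by (apply HC1 || apply HC2).
  specialize (P1 j s). simpl. unfold ratio.
  apply (Rmult_le_reg_r (channel b j psi1 s)); auto.
  unfold Rdiv. rewrite Rmult_assoc, Rinv_l by lra. lra.
Qed.

Lemma beta_le b psi1 psi2 t : Va b psi1 -> Va b psi2 -> 0 < t ->
  (forall j s, channel b j psi2 s < t * channel b j psi1 s) ->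
  Rbar_le (beta b psi1 psi2) (Finite t).
Proof.
  intros H1 H2 Ht Hl. unfold beta.
  apply (Glb_Rbar_correct (fun t => 0 < t /\ Va b (fun s => t * psi1 s - psi2 s))).
  split; auto. apply Va_channels in H1, H2.
  destruct H1 as [HC1 _], H2 as [HC2 _].
  replace (fun s => t * psi1 s - psi2 s) with (fun s => t * psi1 s - 1 * psi2 s)
    by (apply functional_extensionality; intro; ring).
  apply Va_channels. split; [now apply C2T_comb |].
  intros j s. rewrite channel_comb by (apply HC1 || apply HC2).
  specialize (Hl j s). lra.
Qed.

Lemma Rbar_le_of_gt (x : Rbar) m : (forall t, m < t -> Rbar_le x (Finite t)) ->
  Rbar_le x (Finite m).
Proof.
  intro H. destruct x as [v | |]; simpl; auto.
  - destruct (Rle_dec v m) as [Hl | Hl]; auto.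
    specialize (H ((v + m) / 2)). simpl in H. lra.
  - apply (H (m + 1)). lra.
Qed.

Lemma beta_sup_ratios b psi1 psi2 : Va b psi1 -> Va b psi2 ->
  beta b psi1 psi2 = Lub_Rbar (ratios b psi1 psi2).
Proof.
  intros H1 H2.
  destruct (Lub_Rbar_correct (ratios b psi1 psi2)) as [Hub Hlub].
  apply Rbar_le_antisym.
  - assert (Lo : Rbar_le (Finite (ratio b psi1 psi2 0 0)) (Lub_Rbar (ratios b psi1 psi2)))
      by (apply Hub; exists 0%nat, 0; auto).
    pose proof (ratio_pos b psi1 psi2 0 0 H1 H2) as Q.
    destruct (Lub_Rbar (ratios b psi1 psi2)) as [m | |]; simpl in Lo |- *;
      [| now destruct (beta b psi1 psi2) | contradiction].
    apply Rbar_le_of_gt. intros t Ht. apply beta_le; auto; [lra |].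
    intros j s. assert (Hr : ratio b psi1 psi2 j s <= m)
      by (apply (Hub (ratio b psi1 psi2 j s)); exists j, s; auto).
    apply Va_channels in H1. destruct H1 as [_ P1]. specialize (P1 j s).
    unfold ratio in Hr.
    assert (E : channel b j psi2 s = channel b j psi2 s / channel b j psi1 s * channel b j psi1 s)
      by (field; lra).
    rewrite E. nra.
  - apply Hlub. intros r [j [s ->]]. now apply ratio_le_beta.
Qed.

Lemma Lub_Rbar_mult_le (E1 E2 : R -> Prop) C x0 y0 : E1 x0 -> E2 y0 ->
  (forall x, E1 x -> 0 < x) -> (forall y, E2 y -> 0 < y) ->
  (forall x y, E1 x -> E2 y -> x * y <= C) ->
  exists u v, Lub_Rbar E1 = Finite u /\ Lub_Rbar E2 = Finite v /\
              0 < u /\ 0 < v /\ u * v <= C.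
Proof.
  intros Hx0 Hy0 P1 P2 Hp.
  destruct (Lub_Rbar_correct E1) as [Hub1 Hlub1].
  destruct (Lub_Rbar_correct E2) as [Hub2 Hlub2].
  assert (Bound : forall (E : R -> Prop) c, (forall y, E y -> y <= c) ->
             Rbar_le (Lub_Rbar E) (Finite c))
    by (intros E c H; apply (Lub_Rbar_correct E); exact H).
  assert (Div : forall x y, 0 < x -> x * y <= C -> y <= C / x)
    by (intros x y Hx H; apply (Rmult_le_reg_l x); auto; field_simplify; lra).
  assert (Mul : forall x y, 0 < x -> y <= C / x -> x * y <= C).
  { intros x y Hx H. apply (Rmult_le_compat_l x) in H; [| lra].
    replace (x * (C / x)) with C in H by (field; lra). exact H. }
  assert (Lo2 := Hub2 y0 Hy0).
  assert (Up2 : Rbar_le (Lub_Rbar E2) (Finite (C / x0)))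
    by (apply Bound; intros y Hy; apply Div; auto).
  destruct (Lub_Rbar E2) as [v | |]; simpl in Lo2, Up2; try contradiction.
  assert (Hv : 0 < v) by (specialize (P2 y0 Hy0); lra).
  assert (Lo1 := Hub1 x0 Hx0).
  assert (Up1 : Rbar_le (Lub_Rbar E1) (Finite (C / v))).
  { apply Bound. intros x Hx. apply Div; auto. rewrite Rmult_comm.
    assert (Hv' : Rbar_le (Finite v) (Finite (C / x)))
      by (apply Hlub2; intros y Hy; apply Div; auto).
    apply Mul; auto. }
  destruct (Lub_Rbar E1) as [u | |]; simpl in Lo1, Up1; try contradiction.
  assert (Hu : 0 < u) by (specialize (P1 x0 Hx0); lra).
  exists u, v. repeat split; auto.
  rewrite Rmult_comm. now apply Mul.
Qed.

Lemma theta_le_iff b psi1 psi2 c : Va b psi1 -> Va b psi2 ->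
  Rbar_le (theta b psi1 psi2) (Finite c) <->
  forall j1 s1 j2 s2,
    ln (ratio b psi1 psi2 j1 s1) + ln (ratio b psi2 psi1 j2 s2) <= c.
Proof.
  intros H1 H2. unfold theta.
  rewrite (beta_sup_ratios b psi1 psi2), (beta_sup_ratios b psi2 psi1) by auto.
  split.
  - intros Ht j1 s1 j2 s2.
    destruct (Lub_Rbar_correct (ratios b psi1 psi2)) as [Hub1 _].
    destruct (Lub_Rbar_correct (ratios b psi2 psi1)) as [Hub2 _].
    assert (B1 := Hub1 (ratio b psi1 psi2 j1 s1) (ex_intro _ j1 (ex_intro _ s1 eq_refl))).
    assert (B2 := Hub2 (ratio b psi2 psi1 j2 s2) (ex_intro _ j2 (ex_intro _ s2 eq_refl))).
    pose proof (ratio_pos b psi1 psi2 j1 s1 H1 H2) as Q1.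
    pose proof (ratio_pos b psi2 psi1 j2 s2 H2 H1) as Q2.
    destruct (Lub_Rbar (ratios b psi1 psi2)) as [u | |];
      destruct (Lub_Rbar (ratios b psi2 psi1)) as [v | |];
      simpl in *; try contradiction.
    pose proof (ln_le _ _ Q1 B1). pose proof (ln_le _ _ Q2 B2). lra.
  - intros Hc.
    destruct (Lub_Rbar_mult_le (ratios b psi1 psi2) (ratios b psi2 psi1) (exp c)
                (ratio b psi1 psi2 0 0) (ratio b psi2 psi1 0 0))
      as [u [v [Eu [Ev [Hu [Hv Huv]]]]]].
    + now exists 0%nat, 0.
    + now exists 0%nat, 0.
    + intros r [j [s ->]]. now apply ratio_pos.
    + intros r [j [s ->]]. now apply ratio_pos.
    + intros r1 r2 [j1 [s1 ->]] [j2 [s2 ->]].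
      rewrite <- (exp_ln (_ * _)) by (apply Rmult_lt_0_compat; now apply ratio_pos).
      rewrite ln_mult by now apply ratio_pos.
      destruct (Rle_lt_or_eq_dec _ _ (Hc j1 s1 j2 s2)) as [Hl | ->];
        [left; now apply exp_increasing | right; reflexivity].
    + rewrite Eu, Ev. simpl.
      rewrite <- ln_mult, <- (ln_exp c) by auto.
      apply ln_le; [now apply Rmult_lt_0_compat | exact Huv].
Qed.

Lemma Lub_minus_Glb_le (E1 E2 : R -> Prop) L x0 y0 : E1 x0 -> E2 y0 ->
  Rbar_le (Rbar_minus (Lub_Rbar E1) (Glb_Rbar E2)) (Finite L) <->
  forall x y, E1 x -> E2 y -> x - y <= L.
Proof.
  intros Hx0 Hy0.
  destruct (Lub_Rbar_correct E1) as [Au Al].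
  destruct (Glb_Rbar_correct E2) as [Bl Bg].
  split.
  - intros H x y Hx Hy. assert (HA := Au x Hx). assert (HB := Bl y Hy).
    destruct (Lub_Rbar E1) as [A | |]; destruct (Glb_Rbar E2) as [B | |];
      simpl in *; try contradiction. lra.
  - intro H.
    assert (B1 := Bl y0 Hy0).
    assert (B2 : Rbar_le (Finite (x0 - L)) (Glb_Rbar E2))
      by (apply Bg; intros y Hy; specialize (H x0 y Hx0 Hy); simpl; lra).
    destruct (Glb_Rbar E2) as [B | |]; simpl in B1, B2; try contradiction.
    assert (A1 := Au x0 Hx0).
    assert (A2 : Rbar_le (Lub_Rbar E1) (Finite (B + L))).
    { apply Al. intros x Hx.
      assert (Hb : Rbar_le (Finite (x - L)) (Finite B))
        by (apply Bg; intros y Hy; specialize (H x y Hx Hy); simpl; lra).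
      simpl in Hb |- *. lra. }
    destruct (Lub_Rbar E1) as [A | |]; simpl in A1, A2 |- *; try contradiction. lra.
Qed.

Lemma tdist_le s t : tdist s t <= Rabs (s - t).
Proof.
  unfold tdist, frac_part. set (d := s - t).
  destruct (base_Int_part d) as [H1 H2].
  destruct (Rle_dec 0 d).
  - rewrite Rabs_right by lra. eapply Rle_trans; [apply Rmin_l |].
    assert (IZR (Int_part d) >= 0).
    { assert (-1 < IZR (Int_part d)) by lra.
      apply lt_IZR in H. apply Rle_ge. apply IZR_le. lia. }
    lra.
  - rewrite Rabs_left by lra. eapply Rle_trans; [apply Rmin_r |].
    assert (IZR (Int_part d) <= -1).
    { assert (IZR (Int_part d) < 0) by lra.
      apply lt_IZR in H. apply IZR_le. lia. }
    lra.
Qed.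

Lemma tdist_attained s t : exists z : Z, tdist s t = Rabs (s - (t + IZR z)).
Proof.
  unfold tdist.
  assert (Ef : frac_part (s - t) = s - t - IZR (Int_part (s - t))) by reflexivity.
  destruct (base_fp (s - t)) as [F0 F1]. rewrite Ef in *.
  unfold Rmin. destruct (Rle_dec _ _).
  - exists (Int_part (s - t)). rewrite Rabs_right; lra.
  - exists (Int_part (s - t) + 1)%Z. rewrite plus_IZR. simpl.
    rewrite Rabs_left1; lra.
Qed.

Lemma periodic_int {T : Type} (f : R -> T) : (forall t, f (t + 1) = f t) ->
  forall t z, f (t + IZR z) = f t.
Proof.
  intros Hf.
  assert (Hn : forall n t, f (t + INR n) = f t).
  { induction n as [| n IH]; intro t.
    - simpl. now rewrite Rplus_0_r.
    - rewrite S_INR. replace (t + (INR n + 1)) with ((t + INR n) + 1) by ring.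
      now rewrite Hf. }
  intros t [| p | p].
  - now rewrite Rplus_0_r.
  - change (IZR (Z.pos p)) with (IPR p). rewrite <- INR_IPR. apply Hn.
  - rewrite IZR_NEG. change (IZR (Z.pos p)) with (IPR p). rewrite <- INR_IPR.
    rewrite <- (Hn (Pos.to_nat p) (t + - INR (Pos.to_nat p))). f_equal. ring.
Qed.

Lemma is_derive_le_of_increments g t d L : is_derive g t d ->
  (forall h, 0 < h < 1 -> g (t + h) - g t <= L * h) -> d <= L.
Proof.
  intros Hd Hh. apply is_derive_Reals in Hd.
  destruct (Rle_dec d L) as [| Hn]; auto. exfalso.
  destruct (Hd (d - L)) as [del Hdel]; [lra |].
  pose proof (cond_pos del) as Hdel0.
  set (h := Rmin (del / 2) (1 / 2)).
  assert (Hpos : 0 < h) by (apply Rmin_pos; lra).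
  assert (Hlt : h < del) by (pose proof (Rmin_l (del / 2) (1 / 2)); unfold h; lra).
  assert (H1 : h < 1) by (pose proof (Rmin_r (del / 2) (1 / 2)); unfold h; lra).
  specialize (Hh h (conj Hpos H1)).
  assert (Q : (g (t + h) - g t) / h <= L).
  { apply (Rmult_le_reg_r h); auto. unfold Rdiv. rewrite Rmult_assoc, Rinv_l by lra. lra. }
  assert (Hne : h <> 0) by lra.
  assert (Habs : Rabs h < del) by (rewrite Rabs_right; lra).
  specialize (Hdel h Hne Habs). apply Rabs_def2 in Hdel. lra.
Qed.

Lemma Derive_along (f : (nat -> R) -> R) x i s :
  Derive (fun t => f (upd x i t)) s = partial i f (upd x i s).
Proof.
  unfold partial. rewrite upd_same. apply Derive_ext. intro t. now rewrite upd_upd.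
Qed.

Lemma is_derive_along (f : (nat -> R) -> R) x i s :
  (forall z, ex_derive (fun t => f (upd z i t)) (z i)) ->
  is_derive (fun t => f (upd x i t)) s (partial i f (upd x i s)).
Proof.
  intro H. rewrite <- Derive_along. apply Derive_correct.
  specialize (H (upd x i s)). rewrite upd_same in H.
  eapply ex_derive_ext; [| exact H]. intro t. simpl. now rewrite upd_upd.
Qed.

Lemma ex_derive_along (f : (nat -> R) -> R) x i s :
  (forall z, ex_derive (fun t => f (upd z i t)) (z i)) ->
  ex_derive (fun t => f (upd x i t)) s.
Proof. intro H. eexists. now apply is_derive_along. Qed.

Lemma continuous_along N (g : (nat -> R) -> R) x i s :
  contN N g -> continuous (fun t => g (upd x i t)) s.
Proof.
  intro H. apply continuity_pt_filterlim. intros eps Heps.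
  destruct (H (upd x i s) eps Heps) as [d [Hd Hy]].
  exists d. split; auto. intros y [_ Hys]. simpl in *. unfold R_dist in *.
  apply Hy. intros j Hj. unfold upd. destruct (Nat.eqb j i).
  - exact Hys.
  - rewrite Rminus_eq_0, Rabs_R0. exact Hd.
Qed.

(* The two quotient families in A and B, written through the channels
   F_j of eta in direction i and their k-derivatives G_j. *)

Definition eta_channel (i : nat) (eta : (nat -> R) -> R) (b : R) (j : nat)
  (y : nat -> R) : R :=
  match j with
  | O => eta y
  | S O => b * eta y - partial i eta y
  | _ => b * eta y + partial i eta y
  end.

Definition eta_channel_dk (i k : nat) (eta : (nat -> R) -> R) (b : R) (j : nat)
  (y : nat -> R) : R :=
  match j with
  | O => partial k eta y
  | S O => b * partial k eta y - partial k (partial i eta) y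
  | _ => b * partial k eta y + partial k (partial i eta) y
  end.

Definition quotient i k eta b j (x : nat -> R) (s : R) : R :=
  eta_channel_dk i k eta b j (upd x i s) / eta_channel i eta b j (upd x i s).

Lemma quotient_le_max i k eta b j x s : quotient i k eta b j x s <= quot_max i k b eta x s.
Proof.
  unfold quot_max, quotient. destruct j as [| [| j]]; simpl.
  - apply Rmax_l.
  - eapply Rle_trans; [| apply Rmax_r]. apply Rmax_l.
  - eapply Rle_trans; [| apply Rmax_r]. apply Rmax_r.
Qed.

Lemma quotient_ge_min i k eta b j x s : quot_min i k b eta x s <= quotient i k eta b j x s.
Proof.
  unfold quot_min, quotient. destruct j as [| [| j]]; simpl.
  - apply Rmin_l.
  - eapply Rle_trans; [apply Rmin_r |]. apply Rmin_l.
  - eapply Rle_trans; [apply Rmin_r |]. apply Rmin_r.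
Qed.

Lemma quot_max_attained i k eta b x s : exists j, quot_max i k b eta x s = quotient i k eta b j x s.
Proof.
  unfold quot_max, Rmax at 1. destruct (Rle_dec _ _).
  - unfold Rmax. destruct (Rle_dec _ _); [exists 2%nat | exists 1%nat]; reflexivity.
  - exists 0%nat. reflexivity.
Qed.

Lemma quot_min_attained i k eta b x s : exists j, quot_min i k b eta x s = quotient i k eta b j x s.
Proof.
  unfold quot_min, Rmin at 1. destruct (Rle_dec _ _).
  - exists 0%nat. reflexivity.
  - unfold Rmin. destruct (Rle_dec _ _); [exists 1%nat | exists 2%nat]; reflexivity.
Qed.

Definition spread_le i k eta b L (x : nat -> R) : Prop :=
  forall j1 j2 s1 s2, quotient i k eta b j1 x s1 - quotient i k eta b j2 x s2 <= L.

Lemma A_minus_B_le_iff i k eta b L x :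
  Rbar_le (Rbar_minus (A_ik i k b eta x) (B_ik i k b eta x)) (Finite L) <->
  spread_le i k eta b L x.
Proof.
  unfold A_ik, B_ik.
  rewrite (Lub_minus_Glb_le _ _ L (quot_max i k b eta x 0) (quot_min i k b eta x 0))
    by (exists 0; reflexivity).
  split.
  - intros H j1 j2 s1 s2.
    pose proof (quotient_le_max i k eta b j1 x s1).
    pose proof (quotient_ge_min i k eta b j2 x s2).
    assert (H' := H _ _ (ex_intro _ s1 eq_refl) (ex_intro _ s2 eq_refl)). lra.
  - intros H v w [s1 ->] [s2 ->].
    destruct (quot_max_attained i k eta b x s1) as [j1 ->].
    destruct (quot_min_attained i k eta b x s2) as [j2 ->].
    apply H.
Qed.

Section Slices.

Variables (N : nat) (eta : (nat -> R) -> R) (i k : nat).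
Hypotheses (Htor : torus_fun N eta) (HC2 : C2N N eta) (Hpos : forall y, 0 < eta y)
  (Hi : (i < N)%nat) (Hk : (k < N)%nat) (Hki : k <> i).

Lemma ex_derive_eta_i z : ex_derive (fun t => eta (upd z i t)) (z i).
Proof. apply (proj2 HC2 i i Hi Hi). Qed.

Lemma slice_mass_pos x : 0 < RInt (slice i eta x) 0 1.
Proof.
  apply RInt_gt_0; [lra | intros; apply Hpos |].
  intros s _. apply (@ex_derive_continuous R_AbsRing R_NormedModule).
  apply ex_derive_along, ex_derive_eta_i.
Qed.

Lemma channel_slice b j x s : channel b j (slice i eta x) s = eta_channel i eta b j (upd x i s).
Proof. unfold slice. destruct j as [| [| j]]; simpl; auto; now rewrite Derive_along. Qed.

Lemma Va_rho_cond_iff c x : Va c (rho_cond i eta x) <-> Va c (slice i eta x).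
Proof.
  pose proof (slice_mass_pos x) as Hm. unfold rho_cond.
  set (M := RInt (slice i eta x) 0 1) in *. split; intro H.
  - apply (Va_div c _ (/ M)) in H; [| now apply Rinv_0_lt_compat].
    replace (slice i eta x) with (fun s => eta (upd x i s) / M / / M); [exact H |].
    apply functional_extensionality. intro s. unfold slice. field. lra.
  - now apply Va_div.
Qed.

Definition fiber (x : nat -> R) (t : R) : R -> R := rho_cond i eta (upd x k t).

Lemma fiber_periodic x t : fiber x (t + 1) = fiber x t.
Proof.
  unfold fiber, rho_cond.
  assert (E : forall s, eta (upd (upd x k (t + 1)) i s) = eta (upd (upd x k t) i s)).
  { intro s. pose proof (proj2 Htor (upd (upd x k t) i s) k Hk) as Ht.
    rewrite upd_other, upd_same in Ht by auto.
    rewrite <- Ht, !(upd_comm x k i), upd_upd by auto. reflexivity. }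
  assert (Es : slice i eta (upd x k (t + 1)) = slice i eta (upd x k t))
    by (apply functional_extensionality; exact E).
  rewrite Es. apply functional_extensionality. intro s. now rewrite E.
Qed.

Lemma channel_fiber b j x t s :
  channel b j (fiber x t) s =
  eta_channel i eta b j (upd (upd x i s) k t) / RInt (slice i eta (upd x k t)) 0 1.
Proof.
  unfold fiber, rho_cond. rewrite channel_div.
  - fold (slice i eta (upd x k t)). rewrite channel_slice, upd_comm by auto. reflexivity.
  - apply ex_derive_along, ex_derive_eta_i.
Qed.

Section Channels.

Variable b : R.
Hypothesis HV : forall z, Va b (slice i eta z).

Lemma eta_channel_pos j y : 0 < eta_channel i eta b j y.
Proof.
  rewrite <- (upd_id y i), <- channel_slice.
  apply (Va_channels b (slice i eta y)), HV.
Qed.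

Lemma fiber_Va x t : Va b (fiber x t).
Proof. apply Va_rho_cond_iff, HV. Qed.

Definition gap x j1 s1 j2 s2 (t : R) : R :=
  ln (eta_channel i eta b j1 (upd (upd x i s1) k t))
  - ln (eta_channel i eta b j2 (upd (upd x i s2) k t)).

Lemma log_ratio_increment x t t' j1 s1 j2 s2 :
  ln (ratio b (fiber x t) (fiber x t') j1 s1) + ln (ratio b (fiber x t') (fiber x t) j2 s2)
  = gap x j1 s1 j2 s2 t' - gap x j1 s1 j2 s2 t.
Proof.
  unfold ratio, gap. rewrite !channel_fiber.
  pose proof (slice_mass_pos (upd x k t)). pose proof (slice_mass_pos (upd x k t')).
  pose proof (eta_channel_pos j1 (upd (upd x i s1) k t)).
  pose proof (eta_channel_pos j1 (upd (upd x i s1) k t')).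
  pose proof (eta_channel_pos j2 (upd (upd x i s2) k t)).
  pose proof (eta_channel_pos j2 (upd (upd x i s2) k t')).
  rewrite !ln_div; try apply Rdiv_lt_0_compat; auto. ring.
Qed.

Lemma is_derive_eta_channel j y t :
  is_derive (fun t => eta_channel i eta b j (upd y k t)) t
            (eta_channel_dk i k eta b j (upd y k t)).
Proof.
  destruct (proj2 HC2 k k Hk Hk) as [Ek _]. destruct (proj2 HC2 i k Hi Hk) as [_ [Eik _]].
  pose proof (is_derive_along eta y k t Ek) as D0.
  pose proof (is_derive_along (partial i eta) y k t Eik) as D1.
  destruct j as [| [| j]]; simpl.
  - exact D0.
  - apply (is_derive_minus (fun t => b * eta (upd y k t)) (fun t => partial i eta (upd y k t)));
      auto. now apply is_derive_scal.
  - apply (is_derive_plus (fun t => b * eta (upd y k t)) (fun t => partial i eta (upd y k t)));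
      auto. now apply is_derive_scal.
Qed.

Lemma is_derive_gap x j1 s1 j2 s2 t :
  is_derive (gap x j1 s1 j2 s2) t
    (quotient i k eta b j1 (upd x k t) s1 - quotient i k eta b j2 (upd x k t) s2).
Proof.
  assert (Dln : forall j s, is_derive (fun t => ln (eta_channel i eta b j (upd (upd x i s) k t))) t
                  (quotient i k eta b j (upd x k t) s)).
  { intros j s. unfold quotient. rewrite <- upd_comm by auto.
    pose proof (is_derive_comp ln (fun t => eta_channel i eta b j (upd (upd x i s) k t)) t _ _
       (is_derive_ln _ (eta_channel_pos j _)) (is_derive_eta_channel j (upd x i s) t)) as H.
    unfold scal in H; simpl in H; unfold mult in H; simpl in H.
    unfold Rdiv. exact H. }
  apply (is_derive_minus (fun t => ln (eta_channel i eta b j1 (upd (upd x i s1) k t)))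
                         (fun t => ln (eta_channel i eta b j2 (upd (upd x i s2) k t))));
    apply Dln.
Qed.

Lemma fiber_theta_le L : (forall z, spread_le i k eta b L z) ->
  forall x t t', Rbar_le (theta b (fiber x t) (fiber x t')) (Finite (L * Rabs (t' - t))).
Proof.
  intros HS x t t'.
  apply theta_le_iff; [apply fiber_Va.. |]. intros j1 s1 j2 s2.
  rewrite log_ratio_increment.
  set (df := fun u => quotient i k eta b j1 (upd x k u) s1 - quotient i k eta b j2 (upd x k u) s2).
  assert (Bd : forall u, Rabs (df u) <= L).
  { intro u. apply Rabs_le. pose proof (HS (upd x k u) j2 j1 s2 s1).
    pose proof (HS (upd x k u) j1 j2 s1 s2). unfold df. lra. }
  destruct (MVT_gen (gap x j1 s1 j2 s2) t t' df) as [c [_ Hc]].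
  - intros u _. apply is_derive_gap.
  - intros u _. apply continuity_pt_filterlim.
    apply (@ex_derive_continuous R_AbsRing R_NormedModule). eexists. apply is_derive_gap.
  - rewrite Hc. eapply Rle_trans; [apply Rle_abs |]. rewrite Rabs_mult.
    apply Rmult_le_compat_r; [apply Rabs_pos | apply Bd].
Qed.

(* Necessity: the Lipschitz bound for theta_b forces the spread bound, by
   differentiating the gap at x_k. *)
Lemma spread_of_theta_le L x : 0 <= L ->
  (forall x x', (forall j, j <> k -> x j = x' j) ->
     Rbar_le (theta b (rho_cond i eta x) (rho_cond i eta x'))
             (Finite (L * tdist (x k) (x' k)))) ->
  spread_le i k eta b L x.
Proof.
  intros HL Ht j1 j2 s1 s2.
  pose proof (is_derive_gap x j1 s1 j2 s2 (x k)) as D. rewrite upd_id in D.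
  apply (is_derive_le_of_increments _ _ _ _ D). intros h [h0 h1].
  assert (Ex : rho_cond i eta x = fiber x (x k)) by (unfold fiber; now rewrite upd_id).
  assert (Hth : Rbar_le (theta b (fiber x (x k)) (fiber x (x k + h))) (Finite (L * h))).
  { rewrite <- Ex. eapply Rbar_le_trans.
    - apply (Ht x (upd x k (x k + h))). intros j Hj. now rewrite upd_other.
    - rewrite upd_same. simpl. apply Rmult_le_compat_l; auto.
      eapply Rle_trans; [apply tdist_le |]. rewrite Rabs_left; lra. }
  rewrite <- log_ratio_increment. apply theta_le_iff; [apply fiber_Va.. |]. exact Hth.
Qed.

End Channels.

End Slices.

Theorem propositionC1 (N : nat) (eta : (nat -> R) -> R) (a b L : R) (i k : nat)
  (Htor : torus_fun N eta) (HC2 : C2N N eta) (Hpos : forall x, 0 < eta x)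
  (Ha : 0 <= a) (Hab : a <= b) (HL : 0 <= L)
  (Hi : (i < N)%nat) (Hk : (k < N)%nat) (Hki : k <> i) :
  InM i k a b L eta <->
  ((forall x, Va a (slice i eta x)) /\
   (forall x, Rbar_le (Rbar_minus (A_ik i k b eta x) (B_ik i k b eta x))
                      (Finite L))).
Proof.
  assert (Hrho : forall c x, Va c (rho_cond i eta x) <-> Va c (slice i eta x))
    by (intros; now apply (Va_rho_cond_iff N)).
  split.
  - intros [HV Ht].
    assert (HVb : forall z, Va b (slice i eta z))
      by (intro z; apply Va_weaken with a; [exact Hab | apply Hrho, HV]).
    split; intro x.
    + apply Hrho, HV.
    + apply A_minus_B_le_iff. now apply (spread_of_theta_le N).
  - intros [HV HAB].
    assert (HVb : forall z, Va b (slice i eta z)) by (intro z; now apply Va_weaken with a).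
    split; [intro x; now apply Hrho |].
    intros x x' Hxx.
    (* x and x' lie on the same fibre in direction k *)
    assert (Ex : rho_cond i eta x = fiber eta i k x (x k))
      by (unfold fiber; now rewrite upd_id).
    assert (Ex' : rho_cond i eta x' = fiber eta i k x (x' k)).
    { unfold fiber. f_equal. apply functional_extensionality. intro j. unfold upd.
      destruct (Nat.eqb_spec j k); subst; auto. symmetry; auto. }
    destruct (tdist_attained (x k) (x' k)) as [z Hz].
    rewrite Ex, Ex', Hz, <- (periodic_int _ (fiber_periodic N eta i k Htor Hk Hki x) (x' k) z).
    rewrite Rabs_minus_sym. apply (fiber_theta_le N); auto.
    intro y. apply A_minus_B_le_iff, HAB.
Qed.
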